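(* Let $a_1,\ldots,a_k\in\mathbb R^d$ be orthonormal vectors and $u_1,\ldots,u_k\in\mathbb R^d$ unit vectors with $\|u_i-a_i\|_2^2\le\epsilon$ for all $i$. Let $U$ be the $d\times k$ matrix with $i$-th column $u_i$, let $U=X\Sigma Y$ be its singular value decomposition, and let $\tilde u_i=X\Sigma^{-1}X^\top u_i$. Then for any $\delta\in(0,1]$, for at least a $1-\delta$ fraction of $i\in[k]$, $\langle u_i,\tilde u_i\rangle\ge 1-\epsilon/(2\delta)$.
   Context: The singular value decomposition is the compact one: $X$ is $d\times k$ with orthonormal columns, $\Sigma$ is $k\times k$ diagonal with positive entries (so $U$ is assumed to have full column rank), and $Y$ is $k\times k$ orthogonal. *)

From mathcomp Require Import all_boot all_order all_algebra.
Set Implicit Arguments. Unset Strict Implicit. Unset Printing Implicit Defensive.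
Import Order.TTheory GRing.Theory Num.Theory.
Local Open Scope ring_scope.

Definition dotc (R : ringType) (d : nat) (x y : 'cV[R]_d) : R :=
  \sum_(j < d) x j 0 * y j 0.

Definition sqnorm (R : ringType) (d : nat) (x : 'cV[R]_d) : R := dotc x x.

From mathcomp Require Import all_boot all_order all_algebra.
From mathcomp Require Import ring lra.
Set Implicit Arguments. Unset Strict Implicit. Unset Printing Implicit Defensive.
Import Order.TTheory GRing.Theory Num.Theory.
Local Open Scope ring_scope.

(* Since U = X Σ Y, the vector ũ_i = X Σ^-1 X^T u_i is the i-th column of
   Q = X Y, which has orthonormal columns; hence <u_i, ũ_i> = (Y^T Σ Y)_ii <= 1
   and these inner products sum to tr Σ.  By the orthogonal Procrustes
   inequality, X Y maximises tr (U^T Q) among matrices Q with orthonormal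
   columns, so tr Σ >= tr (U^T A) = Σ_i (1 - |u_i - a_i|^2 / 2) >= k (1 - ε/2).
   The nonnegative deficits 1 - <u_i, ũ_i> thus sum to at most k ε / 2, and
   Markov's inequality shows that at most δ k of them exceed ε / (2 δ). *)

Lemma col_mulmx (R : pzRingType) m n p (A : 'M[R]_(m, n)) (B : 'M[R]_(n, p)) i :
  col i (A *m B) = A *m col i B.
Proof. by rewrite !colE mulmxA. Qed.

Lemma dotc_col (R : comNzRingType) d m n (M : 'M[R]_(d, m)) (N : 'M[R]_(d, n)) i j :
  dotc (col i M) (col j N) = (M^T *m N) i j.
Proof. by rewrite /dotc !mxE; apply: eq_bigr => l _; rewrite !mxE. Qed.

Lemma sqnorm_col_orthonormal (R : comNzRingType) d k (M : 'M[R]_(d, k)) i :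
  M^T *m M = 1%:M -> sqnorm (col i M) = 1.
Proof. by move=> hM; rewrite /sqnorm dotc_col hM mxE eqxx. Qed.

Lemma orthonormal_mulmx (R : comNzRingType) d k l
    (M : 'M[R]_(d, k)) (N : 'M[R]_(k, l)) :
  M^T *m M = 1%:M -> N^T *m N = 1%:M -> (M *m N)^T *m (M *m N) = 1%:M.
Proof.
by move=> hM hN; rewrite trmx_mul mulmxA -(mulmxA N^T) hM mulmx1 hN.
Qed.

Section EuclideanNorm.

Variables (R : realFieldType) (d : nat).
Implicit Types x y : 'cV[R]_d.

Lemma sqnorm_ge0 x : 0 <= sqnorm x.
Proof. by apply: sumr_ge0 => j _; rewrite -expr2 sqr_ge0. Qed.

Lemma sqnormB x y : sqnorm (x - y) = sqnorm x - 2 * dotc x y + sqnorm y.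
Proof.
rewrite /sqnorm /dotc mulr_sumr -sumrB -big_split /=.
by apply: eq_bigr => j _; rewrite !mxE; ring.
Qed.

Lemma sqnormB_unit x y :
  sqnorm x = 1 -> sqnorm y = 1 -> sqnorm (x - y) = 2 * (1 - dotc x y).
Proof. by move=> hx hy; rewrite sqnormB hx hy; ring. Qed.

Lemma dotc_le1 x y : sqnorm x = 1 -> sqnorm y = 1 -> dotc x y <= 1.
Proof.
by move=> hx hy; have := sqnorm_ge0 (x - y); rewrite sqnormB_unit //; lra.
Qed.

End EuclideanNorm.

Lemma orthonormal_diag_le1 (R : realFieldType) d k (P Q : 'M[R]_(d, k)) i :
  P^T *m P = 1%:M -> Q^T *m Q = 1%:M -> (P^T *m Q) i i <= 1.
Proof.
by move=> hP hQ; rewrite -dotc_col; apply: dotc_le1; exact: sqnorm_col_orthonormal.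
Qed.

Lemma mxtrace_diag_mul_le (R : realFieldType) d k (s : 'rV[R]_k)
    (P Q : 'M[R]_(d, k)) :
  (forall j, 0 <= s 0 j) -> P^T *m P = 1%:M -> Q^T *m Q = 1%:M ->
  \tr (diag_mx s *m (P^T *m Q)) <= \sum_j s 0 j.
Proof.
move=> hs hP hQ; apply: ler_sum => j _.
by rewrite mul_diag_mx mxE -[leRHS]mulr1 ler_wpM2l ?orthonormal_diag_le1.
Qed.

Lemma svd_whiten (R : comUnitRingType) d k (X : 'M[R]_(d, k)) (S Y : 'M[R]_k) :
  X^T *m X = 1%:M -> S \in unitmx -> X *m invmx S *m X^T *m (X *m S *m Y) = X *m Y.
Proof.
move=> hX hS.
by rewrite !mulmxA -(mulmxA _ X^T) hX mulmx1 -(mulmxA X) mulVmx // mulmx1.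
Qed.

Lemma procrustes_trace_le (R : realFieldType) d k (X A : 'M[R]_(d, k))
    (s : 'rV[R]_k) (Y : 'M[R]_k) :
  (forall j, 0 <= s 0 j) -> X^T *m X = 1%:M -> Y^T *m Y = 1%:M ->
  A^T *m A = 1%:M ->
  \tr ((X *m diag_mx s *m Y)^T *m A) <=
    \tr ((X *m diag_mx s *m Y)^T *m (X *m Y)).
Proof.
move=> hs hX hY hA.
have hYt : Y^T^T *m Y^T = 1%:M by rewrite trmxK; exact: mulmx1C.
have -> : \tr ((X *m diag_mx s *m Y)^T *m (X *m Y)) = \sum_j s 0 j.
  rewrite !trmx_mul tr_diag_mx !mulmxA -(mulmxA _ X^T X) hX mulmx1.
  by rewrite mxtrace_mulC mulmxA (mulmx1C hY) mul1mx mxtrace_diag.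
rewrite !trmx_mul tr_diag_mx !mulmxA -!mulmxA mxtrace_mulC -!mulmxA.
exact: mxtrace_diag_mul_le hs hX (orthonormal_mulmx hA hYt).
Qed.

Section Markov.

Variables (R : realFieldType) (I : finType) (f : I -> R).
Hypothesis f_ge0 : forall i, 0 <= f i.

Lemma markov_card c : 0 <= c -> c * #|[set i | c < f i]|%:R <= \sum_i f i.
Proof.
move=> c_ge0; rewrite -sum1_card natr_sum mulr_sumr big_mkcond /=.
apply: ler_sum => i _; rewrite inE; case: ltP => [/ltW|_]; last exact: f_ge0.
by rewrite mulr1.
Qed.

Lemma card_tail_le c delta :
  0 < delta -> \sum_i f i <= delta * c * #|I|%:R ->
  (1 - delta) * #|I|%:R <= #|[set i | f i <= c]|%:R.
Proof.
move=> delta_gt0 hsum.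
have hcard : #|[set i | f i <= c]| + #|[set i | c < f i]| = #|I|.
  rewrite -(cardsC [set i | f i <= c]); congr (_ + _); apply: eq_card => i.
  by rewrite !inE ltNge.
case: (lerP c 0) => [c_le0|c_gt0].
  have -> : [set i | f i <= c] = [set: I].
    apply/setP => i; rewrite !inE.
    have hn : 0 < delta * #|I|%:R.
      by rewrite mulr_gt0 // ltr0n; apply/card_gt0P; exists i.
    have hfi : f i <= \sum_j f j by rewrite (bigD1 i) //= lerDl sumr_ge0.
    have : 0 <= c * (delta * #|I|%:R).
      by rewrite mulrCA mulrA; apply: le_trans (f_ge0 i) (le_trans hfi hsum).
    rewrite pmulr_lge0 // => c_ge0; have c0 : c = 0 by apply/le_anti/andP.
    by move: hsum; rewrite c0 mulr0 mul0r; lra.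
  by rewrite cardsT; have := ler0n R #|I|; nra.
have := le_trans (markov_card (ltW c_gt0)) hsum.
rewrite [delta * c]mulrC -mulrA ler_pM2l // -hcard natrD; lra.
Qed.

End Markov.

Theorem mainTheorem11 (R : realFieldType) (d k : nat)
  (A U : 'M[R]_(d, k)) (eps : R)
  (hA : A^T *m A = 1%:M)
  (hU : forall i : 'I_k, sqnorm (col i U) = 1)
  (hclose : forall i : 'I_k, sqnorm (col i U - col i A) <= eps)
  (X : 'M[R]_(d, k)) (s : 'rV[R]_k) (Y : 'M[R]_k)
  (hX : X^T *m X = 1%:M)
  (hs : forall i : 'I_k, 0 < s 0 i)
  (hY : Y^T *m Y = 1%:M)
  (hSVD : U = X *m diag_mx s *m Y)
  (delta : R) (hd0 : 0 < delta) (hd1 : delta <= 1) :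
  let ut (i : 'I_k) : 'cV[R]_d :=
    X *m invmx (diag_mx s) *m X^T *m col i U in
  (1 - delta) * k%:R <=
    #|[set i : 'I_k | 1 - eps / (2 * delta) <= dotc (col i U) (ut i)]|%:R.
Proof.
cbv zeta; set Q := X *m Y; set c := eps / (2 * delta).
have hs0 j : 0 <= s 0 j by exact: ltW.
have hQ : Q^T *m Q = 1%:M by exact: orthonormal_mulmx.
have hD : diag_mx s \in unitmx.
  by rewrite unitmxE det_diag unitfE; apply/prodf_neq0 => j _; rewrite gt_eqF.
have utE i : X *m invmx (diag_mx s) *m X^T *m col i U = col i Q.
  by rewrite -col_mulmx hSVD svd_whiten.
under eq_finset => i do rewrite utE dotc_col lerBlDr addrC -lerBlDr.
rewrite -{1}(card_ord k); apply: (card_tail_le _ hd0).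
  by move=> i; rewrite subr_ge0 -dotc_col dotc_le1 ?hU ?sqnorm_col_orthonormal.
have hdist i : 1 - (U^T *m A) i i <= eps / 2.
  have := hclose i.
  by rewrite sqnormB_unit ?hU ?sqnorm_col_orthonormal // dotc_col; lra.
apply: (@le_trans _ _ (\sum_i (1 - (U^T *m A) i i))).
  rewrite !sumrB lerD2l lerN2 hSVD; exact: procrustes_trace_le.
apply: le_trans (ler_sum _ (fun i _ => hdist i)) _.
have -> : delta * c = eps / 2 by rewrite /c; field; rewrite gt_eqF.
by rewrite sumr_const card_ord mulr_natr.
Qed.
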